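(* Suppose the algorithm by which validators cast FFG-votes guarantees, for every validator following it: (1) at most one FFG-vote is sent in any slot; (2) if $\mathcal{T}$ is the target checkpoint of the FFG-vote sent in slot $t$, then $\mathcal{T}.c=t$; (3) if $\mathcal{S}$ and $\mathcal{S}'$ are the source checkpoints of the FFG-votes sent in slots $t$ and $t'$ respectively and $t\le t'$, then $\mathcal{S}\le\mathcal{S}'$. Then honest validators are never slashed, i.e., no validator, as long as it follows the algorithm, ever sends two distinct FFG-votes that together violate $\mathbf{E_1}$ or $\mathbf{E_2}$.
   Context: Time is divided into slots. A checkpoint is a pair $\mathcal{C}=(\chi,c)$ of a chain $\chi$ (whose last block has slot $\chi.p$) and a checkpoint slot $c$. An FFG-vote $\mathcal{C}_1\to\mathcal{C}_2$ has source $\mathcal{C}_1$ and target $\mathcal{C}_2$. Checkpoints are preordered lexicographically: $\mathcal{C}\le\mathcal{C}'$ iff $\mathcal{C}.c<\mathcal{C}'.c$, or $\mathcal{C}.c=\mathcal{C}'.c$ and $\mathcal{C}.\chi.p\le\mathcal{C}'.\chi.p$; $\mathcal{C}<\mathcal{C}'$ means $\mathcal{C}\le\mathcal{C}'$ and not $\mathcal{C}'\le\mathcal{C}$. A validator is slashed (violates a slashing condition) if it has sent two distinct FFG-votes $\mathcal{C}_1\to\mathcal{C}_2$ and $\mathcal{C}_3\to\mathcal{C}_4$ with either $\mathbf{E_1}$: $\mathcal{C}_2.c=\mathcal{C}_4.c$, or $\mathbf{E_2}$: $\mathcal{C}_3<\mathcal{C}_1$ and $\mathcal{C}_2.c<\mathcal{C}_4.c$.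 A validator is honest until it is (possibly) corrupted by the adversary; honest validators follow the algorithm. *)

From Stdlib Require Import Arith.

(* A chain is abstract; [chain_p ch] is the slot of its last block. *)
Record Checkpoint (Chain : Type) := mkCheckpoint { cp_chain : Chain; cp_c : nat }.
Arguments mkCheckpoint {Chain}.
Arguments cp_chain {Chain}.
Arguments cp_c {Chain}.

Record FFGVote (Chain : Type) := mkVote { source : Checkpoint Chain; target : Checkpoint Chain }.
Arguments mkVote {Chain}.
Arguments source {Chain}.
Arguments target {Chain}.

Definition cp_le {Chain} (p : Chain -> nat) (C C' : Checkpoint Chain) : Prop :=
  cp_c C < cp_c C' \/ (cp_c C = cp_c C' /\ p (cp_chain C) <= p (cp_chain C')).

Definition cp_lt {Chain} (p : Chain -> nat) (C C' : Checkpoint Chain) : Prop :=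
  cp_le p C C' /\ ~ cp_le p C' C.

Definition E1 {Chain} (v v' : FFGVote Chain) : Prop :=
  cp_c (target v) = cp_c (target v').

Definition E2 {Chain} (p : Chain -> nat) (v v' : FFGVote Chain) : Prop :=
  cp_lt p (source v') (source v) /\ cp_c (target v) < cp_c (target v').

Definition slashable {Chain} (p : Chain -> nat) (sent : FFGVote Chain -> Prop) : Prop :=
  exists v v', sent v /\ sent v' /\ v <> v' /\ (E1 v v' \/ E2 p v v').

From Stdlib Require Import Arith.

(* Since each vote targets the slot it is sent in, [E1] forces both votes into the same
   slot, where at most one vote is sent; and [E2] orders the sending slots by the targets,
   so monotonicity of the sources contradicts the strict decrease demanded by [E2]. *)

Section HonestVotes.

Variables (Chain : Type) (p : Chain -> nat) (sent_at : nat -> FFGVote Chain -> Prop).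

Hypothesis one_vote_per_slot : forall t v v', sent_at t v -> sent_at t v' -> v = v'.
Hypothesis target_slot : forall t v, sent_at t v -> cp_c (target v) = t.
Hypothesis source_monotone : forall t t' v v', sent_at t v -> sent_at t' v' -> t <= t' ->
  cp_le p (source v) (source v').

Lemma sent_not_E1 {t t' v v'} :
  sent_at t v -> sent_at t' v' -> v <> v' -> ~ E1 v v'.
Proof.
  intros Hv Hv' Hne HE.
  unfold E1 in HE; rewrite (target_slot _ _ Hv), (target_slot _ _ Hv') in HE; subst t'.
  exact (Hne (one_vote_per_slot _ _ _ Hv Hv')).
Qed.

Lemma sent_not_E2 {t t' v v'} :
  sent_at t v -> sent_at t' v' -> ~ E2 p v v'.
Proof.
  intros Hv Hv' [[_ Hsrc] Htgt].
  rewrite (target_slot _ _ Hv), (target_slot _ _ Hv') in Htgt.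
  exact (Hsrc (source_monotone _ _ _ _ Hv Hv' (Nat.lt_le_incl _ _ Htgt))).
Qed.

End HonestVotes.

Theorem lemma4p3 (Chain : Type) (p : Chain -> nat)
    (sent_at : nat -> FFGVote Chain -> Prop)
    (H1 : forall t v v', sent_at t v -> sent_at t v' -> v = v')
    (H2 : forall t v, sent_at t v -> cp_c (target v) = t)
    (H3 : forall t t' v v', sent_at t v -> sent_at t' v' -> t <= t' ->
          cp_le p (source v) (source v')) :
  ~ slashable p (fun v => exists t, sent_at t v).
Proof.
  intros [v [v' [[t Hv] [[t' Hv'] [Hne [HE1 | HE2]]]]]].
  - exact (sent_not_E1 _ _ H1 H2 Hv Hv' Hne HE1).
  - exact (sent_not_E2 _ _ _ H2 H3 Hv Hv' HE2).
Qed.
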